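(* Let $X$ be a real Banach lattice equipped with a sufficiently rich topology $\tau$, and let $A$ be a $\tau$-compact, convex, positive-solid subset of $X_+$. Then for every extreme point $a$ of $A$ there exists an order extreme point $b$ of $A$ with $a\le b$.
   Context: A locally convex Hausdorff topology $\tau$ on a Banach lattice $X$ is called sufficiently rich if (i) the space $X^\tau$ of $\tau$-continuous linear functionals on $X$ is a Banach lattice (with lattice operations given by the Riesz–Kantorovich formulas), and (ii) $X_+$ is $\tau$-closed. A set $A\subseteq X_+$ is positive-solid if whenever $x\in X_+$ and $x\le z$ for some $z\in A$, then $x\in A$. A point $b\in A$ is an order extreme point of $A$ if for all $x_0,x_1\in A$ and $t\in(0,1)$, $b\le(1-t)x_0+tx_1$ implies $x_0=b=x_1$. *)

From Stdlib Require Import Reals List.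
Open Scope R_scope.

Record BanachLattice := {
  car :> Type;
  vadd : car -> car -> car;
  vzero : car;
  vopp : car -> car;
  vscal : R -> car -> car;
  vle : car -> car -> Prop;
  vsup : car -> car -> car;
  vnorm : car -> R;
  vaddA : forall x y z, vadd x (vadd y z) = vadd (vadd x y) z;
  vaddC : forall x y, vadd x y = vadd y x;
  vadd0 : forall x, vadd x vzero = x;
  vaddN : forall x, vadd x (vopp x) = vzero;
  vscal1 : forall x, vscal 1 x = x;
  vscalA : forall s t x, vscal s (vscal t x) = vscal (s * t) x;
  vscalDr : forall t x y, vscal t (vadd x y) = vadd (vscal t x) (vscal t y);
  vscalDl : forall s t x, vscal (s + t) x = vadd (vscal s x) (vscal t x);
  vle_refl : forall x, vle x x;
  vle_anti : forall x y, vle x y -> vle y x -> x = y;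
  vle_trans : forall x y z, vle x y -> vle y z -> vle x z;
  vle_add : forall x y z, vle x y -> vle (vadd x z) (vadd y z);
  vle_scal : forall t x y, 0 <= t -> vle x y -> vle (vscal t x) (vscal t y);
  vsup_ub_l : forall x y, vle x (vsup x y);
  vsup_ub_r : forall x y, vle y (vsup x y);
  vsup_least : forall x y z, vle x z -> vle y z -> vle (vsup x y) z;
  vnorm_eq0 : forall x, vnorm x = 0 -> x = vzero;
  vnorm_scal : forall t x, vnorm (vscal t x) = Rabs t * vnorm x;
  vnorm_triangle : forall x y, vnorm (vadd x y) <= vnorm x + vnorm y;
  vnorm_lattice : forall x y,
      vle (vsup x (vopp x)) (vsup y (vopp y)) -> vnorm x <= vnorm y;
  vcomplete : forall u : nat -> car,
      (forall eps, 0 < eps -> exists N, forall n m, (N <= n)%nat -> (N <= m)%nat ->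
          vnorm (vadd (u n) (vopp (u m))) < eps) ->
      exists l, forall eps, 0 < eps -> exists N, forall n, (N <= n)%nat ->
          vnorm (vadd (u n) (vopp l)) < eps
}.

Arguments vadd {_}. Arguments vzero {_}. Arguments vopp {_}. Arguments vscal {_}.
Arguments vle {_}. Arguments vsup {_}. Arguments vnorm {_}.

Definition vsub {X : BanachLattice} (x y : X) : X := vadd x (vopp y).

Definition positive_cone (X : BanachLattice) : X -> Prop := fun x => vle vzero x.

Definition is_topology {X : Type} (op : (X -> Prop) -> Prop) : Prop :=
  op (fun _ => True) /\
  (forall U V, op U -> op V -> op (fun x => U x /\ V x)) /\
  (forall (I : Type) (U : I -> X -> Prop), (forall i, op (U i)) ->
      op (fun x => exists i, U i x)).

Definition hausdorff {X : Type} (op : (X -> Prop) -> Prop) : Prop :=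
  forall x y : X, x <> y -> exists U V, op U /\ op V /\ U x /\ V y /\
     (forall z, U z -> V z -> False).

Definition convex_set {X : BanachLattice} (C : X -> Prop) : Prop :=
  forall x y t, C x -> C y -> 0 <= t <= 1 ->
    C (vadd (vscal (1 - t) x) (vscal t y)).

Definition locally_convex_hausdorff {X : BanachLattice} (op : (X -> Prop) -> Prop) : Prop :=
  is_topology op /\ hausdorff op /\
  (forall (U : X -> Prop) x y, op U -> U (vadd x y) ->
     exists V W, op V /\ op W /\ V x /\ W y /\
       forall v w, V v -> W w -> U (vadd v w)) /\
  (forall (U : X -> Prop) t x, op U -> U (vscal t x) ->
     exists delta V, 0 < delta /\ op V /\ V x /\
       forall s v, Rabs (s - t) < delta -> V v -> U (vscal s v)) /\
  (forall (U : X -> Prop) x, op U -> U x ->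
     exists V, op V /\ V x /\ convex_set V /\ forall z, V z -> U z).

Definition tau_continuous {X : BanachLattice} (op : (X -> Prop) -> Prop) (f : X -> R) : Prop :=
  forall x eps, 0 < eps -> exists U, op U /\ U x /\
     forall y, U y -> Rabs (f y - f x) < eps.

Definition linear_functional {X : BanachLattice} (f : X -> R) : Prop :=
  (forall x y, f (vadd x y) = f x + f y) /\ (forall t x, f (vscal t x) = t * f x).

Definition tau_dual {X : BanachLattice} (op : (X -> Prop) -> Prop) (f : X -> R) : Prop :=
  linear_functional f /\ tau_continuous op f.

Definition RK_sup {X : BanachLattice} (f g h : X -> R) : Prop :=
  forall x, vle vzero x ->
    is_lub (fun r => exists y, vle vzero y /\ vle y x /\ r = f y + g (vsub x y)) (h x).

(** X^tau is a Banach lattice with the Riesz–Kantorovich lattice operations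
    (the vector operations being pointwise and the order the dual order). *)
Definition dual_is_banach_lattice {X : BanachLattice} (op : (X -> Prop) -> Prop) : Prop :=
  (forall f g, tau_dual op f -> tau_dual op g ->
     exists h, tau_dual op h /\ RK_sup f g h) /\
  exists N : (X -> R) -> R,
    (forall f, tau_dual op f -> N f = 0 -> forall x, f x = 0) /\
    (forall t f, tau_dual op f -> N (fun x => t * f x) = Rabs t * N f) /\
    (forall f g, tau_dual op f -> tau_dual op g ->
        N (fun x => f x + g x) <= N f + N g) /\
    (forall f g af ag, tau_dual op f -> tau_dual op g -> tau_dual op af -> tau_dual op ag ->
        RK_sup f (fun x => - f x) af -> RK_sup g (fun x => - g x) ag ->
        (forall x, vle vzero x -> af x <= ag x) -> N f <= N g) /\
    (forall u : nat -> X -> R, (forall n, tau_dual op (u n)) ->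
      (forall eps, 0 < eps -> exists M, forall n m, (M <= n)%nat -> (M <= m)%nat ->
          N (fun x => u n x - u m x) < eps) ->
      exists l, tau_dual op l /\ forall eps, 0 < eps -> exists M, forall n, (M <= n)%nat ->
          N (fun x => u n x - l x) < eps).

Definition sufficiently_rich {X : BanachLattice} (op : (X -> Prop) -> Prop) : Prop :=
  locally_convex_hausdorff op /\
  dual_is_banach_lattice op /\
  op (fun x => ~ positive_cone X x).

Definition compact_in {X : Type} (op : (X -> Prop) -> Prop) (A : X -> Prop) : Prop :=
  forall (I : Type) (U : I -> X -> Prop), (forall i, op (U i)) ->
    (forall x, A x -> exists i, U i x) ->
    exists l : list I, forall x, A x -> exists i, In i l /\ U i x.

Definition positive_solid {X : BanachLattice} (A : X -> Prop) : Prop :=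
  forall x z, vle vzero x -> vle x z -> A z -> A x.

Definition extreme_point {X : BanachLattice} (A : X -> Prop) (a : X) : Prop :=
  A a /\ forall x0 x1 t, A x0 -> A x1 -> 0 < t < 1 ->
    a = vadd (vscal (1 - t) x0) (vscal t x1) -> x0 = a /\ x1 = a.

Definition order_extreme_point {X : BanachLattice} (A : X -> Prop) (b : X) : Prop :=
  A b /\ forall x0 x1 t, A x0 -> A x1 -> 0 < t < 1 ->
    vle b (vadd (vscal (1 - t) x0) (vscal t x1)) -> x0 = b /\ b = x1.

From Stdlib Require Import Reals List Lra Classical ClassicalEpsilon
  FunctionalExtensionality PropExtensionality ProofIrrelevance.
From mathcomp Require boolp classical_sets.
Open Scope R_scope.

(** Only two features of the sufficiently rich topology are used: it is a
    locally convex Hausdorff vector topology, and [X_+] is closed.  The proof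
    is a Krein–Milman type argument with "order faces": nonempty closed subsets
    of [A] that are upward closed in [A] and contain both ends of every open
    segment of [A] they meet.
    - Riesz decomposition shows that, [A] being positive-solid, the elements
      of [A] above the extreme point [a] form an order face.
    - Compactness (nested intersections of closed sets) and Zorn's lemma give a
      minimal order face [F] inside it, and a minimal element [b] of [F].
    - If [F] had a second point [y], a convex upper semicontinuous function [g]
      (the Minkowski gauge of a convex neighbourhood of [b]) separates [b] from
      [y]; the set of elements of [A] above the points where [g] attains its
      maximum on [F] is a smaller order face not containing [b].  So [F = {b}],
      and a singleton order face consists of an order extreme point. *)

Arguments vaddA {_}. Arguments vaddC {_}. Arguments vadd0 {_}. Arguments vaddN {_}.
Arguments vscal1 {_}. Arguments vscalA {_}. Arguments vscalDr {_}. Arguments vscalDl {_}.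
Arguments vle_refl {_}. Arguments vle_anti {_}. Arguments vle_trans {_}.
Arguments vle_add {_}. Arguments vle_scal {_}.
Arguments vsup_ub_l {_}. Arguments vsup_ub_r {_}. Arguments vsup_least {_}.

Lemma zorn_in (T : Type) (P : T -> Prop) (R : T -> T -> Prop) :
  (forall t, R t t) -> (forall r s t, R r s -> R s t -> R r t) ->
  (forall s t, P s -> P t -> R s t -> R t s -> s = t) ->
  (forall C : T -> Prop, (forall s, C s -> P s) ->
     (forall s t, C s -> C t -> R s t \/ R t s) ->
     exists t, P t /\ forall s, C s -> R s t) ->
  exists t, P t /\ forall s, P s -> R t s -> s = t.
Proof.
  intros Hrefl Htrans Hanti Hchain.
  set (RP := fun s t : {t | P t} => boolp.asbool (R (proj1_sig s) (proj1_sig t))).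
  destruct (@classical_sets.Zorn {t | P t} RP) as [[t Pt] Hmax].
  - intro t; exact (boolp.asboolT (Hrefl _)).
  - intros r s t H1 H2; apply boolp.asboolT;
      exact (Htrans _ _ _ (boolp.asboolW H1) (boolp.asboolW H2)).
  - intros [s Ps] [t Pt] H1 H2.
    assert (E : s = t) by exact (Hanti s t Ps Pt (boolp.asboolW H1) (boolp.asboolW H2)).
    subst t; f_equal; apply proof_irrelevance.
  - intros C Htot.
    destruct (Hchain (fun t => exists Pt : P t, C (exist _ t Pt))) as [t [Pt Ht]].
    + intros s [Ps _]; exact Ps.
    + intros s t [Ps Cs] [Pt Ct].
      destruct (Htot _ _ Cs Ct) as [H|H]; [left|right]; exact (boolp.asboolW H).
    + exists (exist _ t Pt); intros [s Ps] Cs; apply boolp.asboolT, Ht; exists Ps; exact Cs.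
  - exists t; split; [exact Pt|].
    intros s Ps Hts.
    pose proof (Hmax (exist _ s Ps) (boolp.asboolT Hts)) as E.
    exact (f_equal (@proj1_sig _ _) E).
Qed.

Lemma list_max {J : Type} (R : J -> J -> Prop) :
  (forall j, R j j) -> (forall i j k, R i j -> R j k -> R i k) ->
  (forall i j, R i j \/ R j i) ->
  forall l : list J, l = nil \/ exists j0, In j0 l /\ forall j, In j l -> R j j0.
Proof.
  intros Hrefl Htrans Htot l. induction l as [|j1 l IH]; [left; reflexivity|right].
  destruct IH as [->|[j0 [Hj0 Hmax]]].
  - exists j1. split; [left; reflexivity|]. intros j [<-|[]]. apply Hrefl.
  - destruct (Htot j1 j0) as [H|H].
    + exists j0. split; [right; exact Hj0|]. intros j [<-|Hj]; auto.
    + exists j1. split; [left; reflexivity|]. intros j [<-|Hj]; eauto.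
Qed.

Lemma set_ext {T : Type} (P Q : T -> Prop) : (forall x, P x <-> Q x) -> P = Q.
Proof.
  intro H. apply functional_extensionality; intro x. apply propositional_extensionality, H.
Qed.

Definition cmb {X : BanachLattice} (t : R) (x y : X) : X := vadd (vscal (1 - t) x) (vscal t y).

Definition convex_fun {X : BanachLattice} (g : X -> R) : Prop :=
  forall t u v, 0 < t < 1 -> g (cmb t u v) <= (1 - t) * g u + t * g v.

Section VectorAlgebra.
Context {X : BanachLattice}.
Implicit Types x y z w : X.

Lemma vadd0l x : vadd vzero x = x.
Proof. rewrite vaddC; apply vadd0. Qed.

Lemma vaddNl x : vadd (vopp x) x = vzero.
Proof. rewrite vaddC; apply vaddN. Qed.

Lemma vadd_cancel z x y : vadd z x = vadd z y -> x = y.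
Proof.
  intro H. rewrite <- (vadd0l x), <- (vadd0l y), <- (vaddNl z), <- !vaddA, H. reflexivity.
Qed.

Lemma vscal0l x : vscal 0 x = vzero.
Proof. apply (vadd_cancel (vscal 0 x)). rewrite <- vscalDl, vadd0. f_equal; ring. Qed.

Lemma vscal0r t : vscal t (@vzero X) = vzero.
Proof. apply (vadd_cancel (vscal t vzero)). rewrite <- vscalDr, !vadd0. reflexivity. Qed.

Lemma vscalN1 x : vscal (-1) x = vopp x.
Proof.
  apply (vadd_cancel x). rewrite vaddN. rewrite <- (vscal1 x) at 1.
  rewrite <- vscalDl. replace (1 + -1) with 0 by ring. apply vscal0l.
Qed.

Lemma vopp_opp x : vopp (vopp x) = x.
Proof. rewrite <- !vscalN1, vscalA. replace (-1 * -1) with 1 by ring. apply vscal1. Qed.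

Lemma vopp0 : vopp (@vzero X) = vzero.
Proof. rewrite <- vscalN1. apply vscal0r. Qed.

Lemma vadd_swap4 x y z w : vadd (vadd x y) (vadd z w) = vadd (vadd x z) (vadd y w).
Proof. rewrite !vaddA. f_equal. rewrite <- !vaddA. f_equal. apply vaddC. Qed.

Lemma vscalK t x : t <> 0 -> vscal t (vscal (/ t) x) = x.
Proof. intro. rewrite vscalA. replace (t * / t) with 1 by (field; auto). apply vscal1. Qed.

Lemma cmb_shift t x y z : vadd (cmb t x y) z = cmb t (vadd x z) (vadd y z).
Proof.
  unfold cmb. rewrite !vscalDr, vadd_swap4, <- vscalDl.
  replace (1 - t + t) with 1 by ring. rewrite vscal1. reflexivity.
Qed.

Lemma vle_addl z x y : vle x y -> vle (vadd z x) (vadd z y).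
Proof. intro H. rewrite !(vaddC z). apply vle_add, H. Qed.

Lemma vle_opp x y : vle x y -> vle (vopp y) (vopp x).
Proof.
  intro H. pose proof (vle_add _ _ (vadd (vopp x) (vopp y)) H) as H'.
  rewrite vaddA, vaddN, vadd0l, (vaddC (vopp x)), vaddA, vaddN, vadd0l in H'. exact H'.
Qed.

Lemma vle_sub x y : vle x y <-> vle vzero (vadd y (vopp x)).
Proof.
  split; intro H.
  - rewrite <- (vaddN x). apply vle_add, H.
  - pose proof (vle_add _ _ x H) as H'. rewrite vadd0l, <- vaddA, vaddNl, vadd0 in H'. exact H'.
Qed.

Lemma vscal_nonneg t x : 0 <= t -> vle vzero x -> vle vzero (vscal t x).
Proof. intros Ht Hx. rewrite <- (vscal0r t). apply vle_scal; assumption. Qed.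

Lemma vle_unscal t x y : 0 < t -> vle x (vscal t y) -> vle (vscal (/ t) x) y.
Proof.
  intros Ht H. rewrite <- (vscal1 y), <- (Rinv_l t) by lra. rewrite <- vscalA.
  apply vle_scal; [apply Rlt_le, Rinv_0_lt_compat; lra | exact H].
Qed.

(** Riesz decomposition property: [0 <= e <= p + q] with [p, q >= 0] splits as
    [e = e0 + e1] with [0 <= e0 <= p] and [0 <= e1 <= q]; one may take
    [e0 = -((-e) \/ (-p))] and [e1 = e + ((-e) \/ (-p))]. *)
Lemma riesz_decomposition (e p q : X) :
  vle vzero e -> vle vzero p -> vle vzero q -> vle e (vadd p q) ->
  exists e0 e1, vle vzero e0 /\ vle e0 p /\ vle vzero e1 /\ vle e1 q /\ e = vadd e0 e1.
Proof.
  intros He Hp Hq Hepq.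
  set (s := vsup (vopp e) (vopp p)).
  assert (Hs0 : vle s vzero) by (apply vsup_least; rewrite <- vopp0; apply vle_opp; assumption).
  assert (Hps : vle (vopp p) s) by apply vsup_ub_r.
  assert (Hes : vle (vopp e) s) by apply vsup_ub_l.
  assert (Hsqe : vle s (vadd q (vopp e))).
  { apply vsup_least.
    - pose proof (vle_add _ _ (vopp e) Hq) as H. rewrite vadd0l in H. exact H.
    - apply vle_sub in Hepq. apply vle_sub. rewrite vopp_opp, (vaddC _ p), vaddA. exact Hepq. }
  exists (vopp s), (vadd e s). repeat split.
  - rewrite <- vopp0. apply vle_opp, Hs0.
  - rewrite <- (vopp_opp p). apply vle_opp, Hps.
  - pose proof (vle_addl e _ _ Hes) as H. rewrite vaddN in H. exact H.
  - pose proof (vle_addl e _ _ Hsqe) as H. rewrite (vaddC q), vaddA, vaddN, vadd0l in H. exact H.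
  - rewrite vaddA, (vaddC (vopp s) e), <- vaddA, vaddNl, vadd0. reflexivity.
Qed.

Lemma riesz_decomposition_cmb (e x0 x1 : X) t :
  0 < t < 1 -> vle vzero e -> vle vzero x0 -> vle vzero x1 -> vle e (cmb t x0 x1) ->
  exists u0 u1, vle vzero u0 /\ vle u0 x0 /\ vle vzero u1 /\ vle u1 x1 /\ e = cmb t u0 u1.
Proof.
  intros Ht He H0 H1 H.
  destruct (riesz_decomposition e (vscal (1 - t) x0) (vscal t x1) He
              (vscal_nonneg (1 - t) x0 ltac:(lra) H0) (vscal_nonneg t x1 ltac:(lra) H1) H)
    as [e0 [e1 [He0 [He0x [He1 [He1x ->]]]]]].
  exists (vscal (/ (1 - t)) e0), (vscal (/ t) e1). repeat split.
  - apply vscal_nonneg; [apply Rlt_le, Rinv_0_lt_compat; lra | exact He0].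
  - apply vle_unscal; [lra | exact He0x].
  - apply vscal_nonneg; [apply Rlt_le, Rinv_0_lt_compat; lra | exact He1].
  - apply vle_unscal; [lra | exact He1x].
  - unfold cmb. rewrite !vscalK by lra. reflexivity.
Qed.

End VectorAlgebra.

Section Topology.
Context {X : BanachLattice} (tau : (X -> Prop) -> Prop) (Hlc : locally_convex_hausdorff tau).

Definition closed (K : X -> Prop) : Prop := tau (fun x => ~ K x).

Definition continuous_map (f : X -> X) : Prop :=
  forall (U : X -> Prop) x, tau U -> U (f x) ->
    exists V, tau V /\ V x /\ forall v, V v -> U (f v).

Definition usc (g : X -> R) : Prop := forall c, tau (fun z => g z < c).

Lemma open_ext (P Q : X -> Prop) : (forall x, P x <-> Q x) -> tau P -> tau Q.
Proof. intros H HP. rewrite <- (set_ext P Q H). exact HP. Qed.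

Lemma closed_ext (P Q : X -> Prop) : (forall x, P x <-> Q x) -> closed P -> closed Q.
Proof. intros H. apply open_ext. intro x. rewrite (H x). tauto. Qed.

Lemma open_full : tau (fun _ => True).
Proof. exact (proj1 (proj1 Hlc)). Qed.

Lemma open_inter (U V : X -> Prop) : tau U -> tau V -> tau (fun x => U x /\ V x).
Proof. exact (proj1 (proj2 (proj1 Hlc)) U V). Qed.

Lemma open_union (I : Type) (U : I -> X -> Prop) :
  (forall i, tau (U i)) -> tau (fun x => exists i, U i x).
Proof. exact (proj2 (proj2 (proj1 Hlc)) I U). Qed.

Lemma open_local (P : X -> Prop) :
  (forall x, P x -> exists O, tau O /\ O x /\ forall z, O z -> P z) -> tau P.
Proof.
  intro H.
  apply open_ext with
    (fun x => exists O : {O : X -> Prop | tau O /\ forall z, O z -> P z}, proj1_sig O x).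
  - intro x; split.
    + intros [O Ox]. exact (proj2 (proj2_sig O) x Ox).
    + intro Px. destruct (H x Px) as [O [HO [Ox HOP]]].
      exists (exist _ O (conj HO HOP)). exact Ox.
  - apply open_union. intro O. exact (proj1 (proj2_sig O)).
Qed.

Lemma open_list_inter {I : Type} (U : I -> X -> Prop) (l : list I) :
  (forall i, tau (U i)) -> tau (fun x => forall i, In i l -> U i x).
Proof.
  intro HU. induction l as [|i l IH].
  - apply open_ext with (fun _ => True); [|exact open_full].
    intro x; split; [intros _ j []|auto].
  - apply open_ext with (fun x => U i x /\ forall j, In j l -> U j x).
    + intro x; split.
      * intros [Hi Hl] j [<-|Hj]; auto.
      * intro H. split; [apply H; left; reflexivity|]. intros j Hj; apply H; right; exact Hj.
    + apply open_inter; auto.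
Qed.

Lemma closed_Inter (I : Type) (K : I -> X -> Prop) :
  (forall i, closed (K i)) -> closed (fun x => forall i, K i x).
Proof.
  intro HK. unfold closed. apply open_ext with (fun x => exists i, ~ K i x).
  - intro x; split; [intros [i Hi] H; exact (Hi (H i)) | apply not_all_ex_not].
  - apply open_union, HK.
Qed.

Lemma closed_and (K1 K2 : X -> Prop) :
  closed K1 -> closed K2 -> closed (fun x => K1 x /\ K2 x).
Proof.
  intros H1 H2.
  apply closed_ext with (fun x => forall b : bool, if b then K1 x else K2 x).
  - intro x; split; [intro H; exact (conj (H true) (H false)) | intros [? ?] [|]; assumption].
  - apply closed_Inter. intros [|]; assumption.
Qed.

Lemma closed_superlevel (g : X -> R) (c : R) : usc g -> closed (fun z => c <= g z).
Proof. intro Hg. apply open_ext with (fun z => g z < c); [intro z; lra | apply Hg]. Qed.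

Lemma open_preimage (f : X -> X) (U : X -> Prop) :
  continuous_map f -> tau U -> tau (fun x => U (f x)).
Proof. intros Hf HU. apply open_local. intros x Hx. exact (Hf U x HU Hx). Qed.

Lemma continuous_translation (c : X) : continuous_map (fun x => vadd x c).
Proof.
  intros U x HU Hx.
  destruct (proj1 (proj2 (proj2 Hlc)) U x c HU Hx) as [V [W [HV [_ [Vx [Wc HVW]]]]]].
  exists V. repeat split; auto.
Qed.

Lemma continuous_scaling (s : R) : continuous_map (fun x => vscal s x).
Proof.
  intros U x HU Hx.
  destruct (proj1 (proj2 (proj2 (proj2 Hlc))) U s x HU Hx) as [d [V [Hd [HV [Vx Hsc]]]]].
  exists V. repeat split; auto. intros v Hv. apply Hsc; auto.
  rewrite Rminus_diag, Rabs_R0. exact Hd.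
Qed.

Lemma continuous_comp (f g : X -> X) :
  continuous_map f -> continuous_map g -> continuous_map (fun x => f (g x)).
Proof.
  intros Hf Hg U x HU Hx. destruct (Hf U (g x) HU Hx) as [V [HV [Vx HVU]]].
  destruct (Hg V x HV Vx) as [W [HW [Wx HWV]]]. exists W; auto.
Qed.

Lemma continuous_difference (U : X -> Prop) (w y : X) : tau U -> U (vadd y (vopp w)) ->
  exists V W, tau V /\ tau W /\ V w /\ W y /\
    forall w' y', V w' -> W y' -> U (vadd y' (vopp w')).
Proof.
  intros HU Hyw.
  destruct (proj1 (proj2 (proj2 Hlc)) U y (vopp w) HU Hyw) as [W [V' [HW [HV' [Wy [V'w HWV']]]]]].
  destruct (continuous_scaling (-1) V' w HV') as [V [HV [Vw HVV']]];
    [rewrite vscalN1; exact V'w|].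
  exists V, W. repeat split; auto. intros w' y' Vw' Wy'. apply HWV'; [exact Wy'|].
  rewrite <- vscalN1. apply HVV', Vw'.
Qed.

End Topology.

Section OrderIntervals.
Context {X : BanachLattice} (tau : (X -> Prop) -> Prop) (Hlc : locally_convex_hausdorff tau)
  (Hpos : tau (fun x => ~ positive_cone X x)).

(** Since [X_+] is closed and translations and scalings are continuous,
    the order intervals [[c, +oo)] and [(-oo, c]] are closed. *)
Lemma closed_upper_interval (c : X) : closed tau (fun x => vle c x).
Proof.
  apply (open_ext tau (fun x => ~ positive_cone X (vadd x (vopp c)))).
  - intro x. unfold positive_cone. rewrite <- vle_sub. tauto.
  - apply (open_preimage tau Hlc (fun x => vadd x (vopp c)) (fun w => ~ positive_cone X w)); [|exact Hpos].
    apply continuous_translation, Hlc.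
Qed.

Lemma closed_lower_interval (c : X) : closed tau (fun x => vle x c).
Proof.
  apply (open_ext tau (fun x => ~ positive_cone X (vadd (vscal (-1) x) c))).
  - intro x. unfold positive_cone. rewrite vscalN1, vaddC, <- vle_sub. tauto.
  - apply (open_preimage tau Hlc (fun x => vadd (vscal (-1) x) c) (fun w => ~ positive_cone X w)); [|exact Hpos].
    apply (continuous_comp tau (fun x => vadd x c) (vscal (-1)));
      [apply continuous_translation | apply continuous_scaling]; exact Hlc.
Qed.

End OrderIntervals.

Section Compactness.
Context {X : BanachLattice} (tau : (X -> Prop) -> Prop) (Hlc : locally_convex_hausdorff tau)
  (A : X -> Prop) (HAcomp : compact_in tau A).

(** Tube lemma: if each point of [A] and the point [y] have neighbourhoods on
    which the relation [P] holds, then one neighbourhood of [y] works for all of [A]. *)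
Lemma compact_tube (P : X -> X -> Prop) (y : X) :
  (forall w, A w -> exists V W, tau V /\ tau W /\ V w /\ W y /\
     forall w' y', V w' -> W y' -> P w' y') ->
  exists W, tau W /\ W y /\ forall w y', A w -> W y' -> P w y'.
Proof.
  intro Hloc.
  destruct (choice (fun (w : {w | A w}) (VW : (X -> Prop) * (X -> Prop)) =>
      tau (fst VW) /\ tau (snd VW) /\ fst VW (proj1_sig w) /\ snd VW y /\
      forall w' y', fst VW w' -> snd VW y' -> P w' y')) as [f Hf].
  { intros [w Aw]. destruct (Hloc w Aw) as [V [W H]]. exists (V, W). exact H. }
  destruct (HAcomp _ (fun i => fst (f i))) as [l Hl].
  - intro i; apply Hf.
  - intros w Aw. exists (exist _ w Aw). apply Hf.
  - exists (fun z => forall i, In i l -> snd (f i) z). repeat split.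
    + apply (open_list_inter tau Hlc). intro i; apply Hf.
    + intros i _; apply Hf.
    + intros w z Aw Hz. destruct (Hl w Aw) as [i [Hi Hwi]]. exact (proj2 (proj2 (proj2 (proj2 (Hf i)))) w z Hwi (Hz i Hi)).
Qed.

Lemma compact_closed : closed tau A.
Proof.
  apply (open_local tau Hlc). intros y Hy.
  destruct (compact_tube (fun w y' => w <> y') y) as [W [HW [Wy Hsep]]].
  - intros w Aw. assert (Hwy : w <> y) by (intros ->; exact (Hy Aw)).
    destruct (proj1 (proj2 Hlc) w y Hwy) as [U [V [HU [HV [Uw [Vy Hdis]]]]]].
    exists U, V. repeat split; auto. intros w' y' Uw' Vy' ->. exact (Hdis y' Uw' Vy').
  - exists W. repeat split; auto. intros z Wz Az. exact (Hsep z z Az Wz eq_refl).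
Qed.

Lemma compact_nested_inter (I : Type) (K0 : X -> Prop) (K : I -> X -> Prop) :
  closed tau K0 -> (forall x, K0 x -> A x) -> (forall i, closed tau (K i)) ->
  (forall i j, (forall x, K i x -> K j x) \/ (forall x, K j x -> K i x)) ->
  (exists x, K0 x) -> (forall i, exists x, K0 x /\ K i x) ->
  exists x, K0 x /\ forall i, K i x.
Proof.
  intros HK0 K0A HK Hnest [x0 K0x0] Hmeet.
  destruct (classic (exists i : I, True)) as [[i0 _]|Hempty].
  2: { exists x0. split; [exact K0x0|]. intro i. exfalso. apply Hempty. exists i. trivial. }
  apply NNPP; intro Hno.
  destruct (HAcomp I (fun i x => ~ (K0 x /\ K i x))) as [l Hl].
  - intro i. apply (closed_and tau Hlc); auto.
  - intros x Ax. destruct (classic (K0 x)) as [K0x|nK0x].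
    + apply NNPP; intro Hn. apply Hno. exists x. split; [exact K0x|].
      intro i. apply NNPP; intro nKix. apply Hn. exists i. tauto.
    + exists i0. tauto.
  - assert (Hdir : l = nil \/ exists j0, In j0 l /\ forall i, In i l -> forall x, K j0 x -> K i x).
    { apply (list_max (fun i j => forall x, K j x -> K i x)).
      - intros i x Hx; exact Hx.
      - intros i j k Hij Hjk x Hx; auto.
      - intros i j. destruct (Hnest i j); auto. }
    destruct Hdir as [->|[j0 [_ Hmax]]].
    + destruct (Hl x0 (K0A x0 K0x0)) as [i [[] _]].
    + destruct (Hmeet j0) as [x [K0x Kx]].
      destruct (Hl x (K0A x K0x)) as [i [Hi Hnot]]. exact (Hnot (conj K0x (Hmax i Hi x Kx))).
Qed.

Lemma usc_attains_max (K : X -> Prop) (g : X -> R) :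
  closed tau K -> (forall x, K x -> A x) -> (exists x, K x) -> usc tau g ->
  exists z0, K z0 /\ forall z, K z -> g z <= g z0.
Proof.
  intros HK KA Kne Hg.
  destruct (compact_nested_inter {c | K c} K (fun c z => g (proj1_sig c) <= g z) HK KA)
    as [z0 [Kz0 Hz0]].
  - intro c. apply closed_superlevel, Hg.
  - intros [c Kc] [d Kd]; simpl.
    destruct (Rle_lt_dec (g c) (g d)); [right|left]; intros z Hz; lra.
  - exact Kne.
  - intros [c Kc]. exists c. simpl. split; [exact Kc | lra].
  - exists z0. split; [exact Kz0|]. intros z Kz. exact (Hz0 (exist _ z Kz)).
Qed.

Context (Hpos : tau (fun x => ~ positive_cone X x)).

Lemma closed_upward_closure (K : X -> Prop) :
  closed tau K -> (forall x, K x -> A x) -> closed tau (fun y => exists w, K w /\ vle w y).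
Proof.
  intros HK KA. apply (open_local tau Hlc). intros y Hy.
  destruct (compact_tube (fun w y' => ~ (K w /\ vle w y')) y) as [W [HW [Wy Hsep]]].
  - intros w Aw. destruct (classic (K w)) as [Kw|nKw].
    + assert (Hyw : ~ positive_cone X (vadd y (vopp w))).
      { unfold positive_cone. rewrite <- vle_sub. intro Hwy. apply Hy. exists w. auto. }
      destruct (continuous_difference tau Hlc _ w y Hpos Hyw) as [V [W [HV [HW [Vw [Wy HVW]]]]]].
      exists V, W. repeat split; auto. intros w' y' Vw' Wy' [_ Hw'y'].
      apply (HVW w' y' Vw' Wy'). unfold positive_cone. rewrite <- vle_sub. exact Hw'y'.
    + exists (fun z => ~ K z), (fun _ => True).
      split; [exact HK|]. split; [exact (open_full tau Hlc)|]. split; [exact nKw|].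
      split; [trivial|]. intros w' y' nKw' _ [Kw' _]. exact (nKw' Kw').
  - exists W. repeat split; auto. intros z Wz [w [Kw Hwz]]. exact (Hsep w z (KA w Kw) Wz (conj Kw Hwz)).
Qed.

Lemma closed_has_minimal (F : X -> Prop) :
  closed tau F -> (forall x, F x -> A x) -> (exists x, F x) ->
  exists m, F m /\ forall x, F x -> vle x m -> x = m.
Proof.
  intros HF FA Fne.
  apply (zorn_in X F (fun x y => vle y x)).
  - intro x; apply vle_refl.
  - intros r s t Hsr Hts. exact (vle_trans _ _ _ Hts Hsr).
  - intros s t _ _ Hts Hst. apply vle_anti; assumption.
  - intros C CF Ctot.
    destruct (compact_nested_inter {c | C c} F (fun c z => vle z (proj1_sig c)) HF FA)
      as [z [Fz Hz]].
    + intro c. apply (closed_lower_interval tau Hlc Hpos).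
    + intros [c Cc] [d Cd]; simpl.
      destruct (Ctot c d Cc Cd) as [H|H]; [right|left]; intros x Hx; eapply vle_trans; eauto.
    + exact Fne.
    + intros [c Cc]. exists c. split; [exact (CF c Cc) | apply vle_refl].
    + exists z. split; [exact Fz|]. intros s Cs. exact (Hz (exist _ s Cs)).
Qed.

End Compactness.

Definition is_infimum (S : R -> Prop) (q : R) : Prop :=
  (forall l, S l -> q <= l) /\ (forall c, q < c -> exists l, S l /\ l < c).

Lemma infimum_exists (S : R -> Prop) :
  (exists l, S l) -> (forall l, S l -> 0 < l) -> exists q, is_infimum S q.
Proof.
  intros [l0 Sl0] Spos.
  set (E := fun r => exists l, S l /\ r = - l).
  destruct (completeness E) as [m [Hub Hleast]].
  - exists 0. intros r [l [Sl ->]]. pose proof (Spos l Sl). lra.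
  - exists (- l0), l0. auto.
  - exists (- m). split.
    + intros l Sl. assert (- l <= m) by (apply Hub; exists l; auto). lra.
    + intros c Hc. apply NNPP; intro Hno.
      assert (m <= - c).
      { apply Hleast. intros r [l [Sl ->]]. apply Ropp_le_contravar, Rnot_lt_le.
        intro Hlc. apply Hno. exists l. auto. }
      lra.
Qed.

Section MinkowskiGauge.
Context {X : BanachLattice} (tau : (X -> Prop) -> Prop) (Hlc : locally_convex_hausdorff tau)
  (W : X -> Prop) (HWo : tau W) (HW0 : W vzero) (HWc : convex_set W).

Definition gauge_scale (z : X) (l : R) : Prop := 0 < l /\ W (vscal (/ l) z).

Lemma gauge_scale_exists (z : X) : exists l, gauge_scale z l.
Proof.
  assert (H0 : W (vscal 0 z)) by (rewrite vscal0l; exact HW0).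
  destruct (proj1 (proj2 (proj2 (proj2 Hlc))) W 0 z HWo H0) as [d [V [Hd [_ [Vz Hsc]]]]].
  exists (2 / d). split; [apply Rdiv_lt_0_compat; lra|].
  replace (/ (2 / d)) with (d / 2) by (field; lra). apply Hsc; [|exact Vz].
  rewrite Rminus_0_r, Rabs_right; lra.
Qed.

(** Admissible scales form an upper set, by convexity of [W] around [0]. *)
Lemma gauge_scale_mono (z : X) (l m : R) : gauge_scale z l -> l <= m -> gauge_scale z m.
Proof.
  intros [Hl Hz] Hlm. split; [lra|].
  pose proof (HWc vzero (vscal (/ l) z) (l / m) HW0 Hz) as H.
  rewrite vscal0r, vadd0l, vscalA in H. replace (l / m * / l) with (/ m) in H by (field; lra).
  apply H. split; [apply Rlt_le, Rdiv_lt_0_compat; lra|].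
  apply Rmult_le_reg_r with m; [lra|]. unfold Rdiv. rewrite Rmult_assoc, Rinv_l by lra. lra.
Qed.

Section GaugeProperties.
Context (p : X -> R) (Hp : forall z, is_infimum (gauge_scale z) (p z)).

Lemma gauge_usc : usc tau p.
Proof.
  intro c. apply (open_local tau Hlc). intros z Hz.
  destruct (proj2 (Hp z) c Hz) as [l [[Hl HWl] Hlt]].
  exists (fun w => W (vscal (/ l) w)). split; [|split; [exact HWl|]].
  - apply (open_preimage tau Hlc (vscal (/ l)) W); [apply continuous_scaling, Hlc | exact HWo].
  - intros w Hw. pose proof (proj1 (Hp w) l (conj Hl Hw)). lra.
Qed.

Lemma gauge_zero : p vzero <= 0.
Proof.
  apply Rnot_lt_le; intro Hpos.
  assert (Hl : gauge_scale vzero (p vzero / 2)) by (split; [lra | rewrite vscal0r; exact HW0]).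
  pose proof (proj1 (Hp vzero) _ Hl). lra.
Qed.

Lemma gauge_lt_one (z : X) : p z < 1 -> W z.
Proof.
  intro H. destruct (proj2 (Hp z) 1 H) as [l [Hl Hl1]].
  destruct (gauge_scale_mono z l 1 Hl ltac:(lra)) as [_ H1]. rewrite Rinv_1, vscal1 in H1. exact H1.
Qed.

Lemma gauge_convex : convex_fun p.
Proof.
  intros t u v Ht. apply Rnot_lt_le. intro Hgt.
  set (eps := (p (cmb t u v) - ((1 - t) * p u + t * p v)) / 2).
  destruct (proj2 (Hp u) (p u + eps) ltac:(unfold eps; lra)) as [l [[Hl Hlu] Hl2]].
  destruct (proj2 (Hp v) (p v + eps) ltac:(unfold eps; lra)) as [m [[Hm Hmv] Hm2]].
  set (k := (1 - t) * l + t * m).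
  assert (Htl : 0 < (1 - t) * l) by (apply Rmult_lt_0_compat; lra).
  assert (Htm : 0 < t * m) by (apply Rmult_lt_0_compat; lra).
  assert (Hk : 0 < k) by (unfold k; lra).
  assert (Hscale : gauge_scale (cmb t u v) k).
  { split; [exact Hk|].
    replace (vscal (/ k) (cmb t u v)) with (cmb (t * m / k) (vscal (/ l) u) (vscal (/ m) v)).
    - apply HWc; [exact Hlu | exact Hmv|]. split.
      + apply Rlt_le, Rdiv_lt_0_compat; assumption.
      + apply Rmult_le_reg_r with k; [exact Hk|].
        unfold Rdiv. rewrite Rmult_assoc, Rinv_l by lra. unfold k. lra.
    - unfold cmb. rewrite vscalDr, !vscalA. unfold k in *.
      f_equal; f_equal; field; repeat split; lra. }
  pose proof (proj1 (Hp _) k Hscale).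
  assert ((1 - t) * l <= (1 - t) * (p u + eps)) by (apply Rmult_le_compat_l; lra).
  assert (t * m <= t * (p v + eps)) by (apply Rmult_le_compat_l; lra).
  unfold k, eps in *. lra.
Qed.

End GaugeProperties.

Lemma minkowski_gauge :
  exists p : X -> R, usc tau p /\ convex_fun p /\ p vzero <= 0 /\ forall z, p z < 1 -> W z.
Proof.
  destruct (choice (fun z q => is_infimum (gauge_scale z) q)) as [p Hp].
  - intro z. apply infimum_exists; [apply gauge_scale_exists | intros l [Hl _]; exact Hl].
  - exists p. split; [|split; [|split]].
    + exact (gauge_usc p Hp).
    + exact (gauge_convex p Hp).
    + exact (gauge_zero p Hp).
    + exact (gauge_lt_one p Hp).
Qed.

End MinkowskiGauge.

(** Separation of two distinct points by an upper semicontinuous convex function: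
    translate a convex open neighbourhood of [m] missing [y] to [0] and take
    its Minkowski gauge. *)
Lemma convex_usc_separation {X : BanachLattice} (tau : (X -> Prop) -> Prop)
  (Hlc : locally_convex_hausdorff tau) (m y : X) : m <> y ->
  exists g, usc tau g /\ convex_fun g /\ g m <= 0 /\ 1 <= g y.
Proof.
  intro Hmy.
  destruct (proj1 (proj2 Hlc) m y Hmy) as [U [V [HU [_ [Um [Vy Hdis]]]]]].
  destruct (proj2 (proj2 (proj2 (proj2 Hlc))) U m HU Um) as [W [HW [Wm [Wconv WU]]]].
  set (W0 := fun z => W (vadd z m)).
  assert (HW0 : tau W0).
  { apply (open_preimage tau Hlc (fun z => vadd z m) W); [apply continuous_translation, Hlc | exact HW]. }
  assert (W00 : W0 vzero) by (unfold W0; rewrite vadd0l; exact Wm).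
  assert (W0conv : convex_set W0).
  { intros z1 z2 t H1 H2 Ht. unfold W0. change (W (vadd (cmb t z1 z2) m)).
    rewrite cmb_shift. apply Wconv; assumption. }
  destruct (minkowski_gauge tau Hlc W0 HW0 W00 W0conv) as [p [Hpusc [Hpconv [Hp0 Hp1]]]].
  exists (fun z => p (vadd z (vopp m))). split; [|split; [|split]].
  - intro c. apply (open_preimage tau Hlc (fun z => vadd z (vopp m)) (fun w => p w < c));
      [apply continuous_translation, Hlc | apply Hpusc].
  - intros t u v Ht. simpl. rewrite cmb_shift. apply Hpconv, Ht.
  - simpl. rewrite vaddN. exact Hp0.
  - simpl. apply Rnot_lt_le. intro Hlt. apply (Hdis y); [|exact Vy].
    apply WU. pose proof (Hp1 _ Hlt) as H. unfold W0 in H.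
    rewrite <- vaddA, vaddNl, vadd0 in H. exact H.
Qed.

Lemma cmb_at_max (a b M t : R) :
  0 < t < 1 -> a <= M -> b <= M -> M <= (1 - t) * a + t * b -> M <= a /\ M <= b.
Proof. intros Ht Ha Hb H. split; nra. Qed.

Section OrderFaces.
Context {X : BanachLattice} (tau : (X -> Prop) -> Prop) (Hlc : locally_convex_hausdorff tau)
  (Hpos : tau (fun x => ~ positive_cone X x))
  (A : X -> Prop) (HApos : forall x, A x -> positive_cone X x) (HAcomp : compact_in tau A)
  (HAconv : convex_set A) (HAsolid : positive_solid A).

Record order_face (S : X -> Prop) : Prop := {
  face_closed : closed tau S;
  face_nonempty : exists x, S x;
  face_sub : forall x, S x -> A x;
  face_up : forall x y, S x -> A y -> vle x y -> S y;
  face_split : forall x0 x1 t, A x0 -> A x1 -> 0 < t < 1 ->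
    S (cmb t x0 x1) -> S x0 /\ S x1
}.

Lemma solid_decomposition (w x0 x1 : X) t :
  A w -> A x0 -> A x1 -> 0 < t < 1 -> vle w (cmb t x0 x1) ->
  exists u0 u1, A u0 /\ vle u0 x0 /\ A u1 /\ vle u1 x1 /\ w = cmb t u0 u1.
Proof.
  intros Aw A0 A1 Ht Hw.
  destruct (riesz_decomposition_cmb w x0 x1 t Ht (HApos w Aw) (HApos x0 A0) (HApos x1 A1) Hw)
    as [u0 [u1 [H0 [Hu0 [H1 [Hu1 Heq]]]]]].
  exists u0, u1. repeat split; auto; eapply HAsolid; eauto.
Qed.

Lemma extreme_upper_face (a : X) : extreme_point A a -> order_face (fun x => A x /\ vle a x).
Proof.
  intros [Aa Hext]. split.
  - apply (closed_and tau Hlc); [exact (compact_closed tau Hlc A HAcomp) | exact (closed_upper_interval tau Hlc Hpos a)].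
  - exists a. split; [exact Aa | apply vle_refl].
  - intros x [Ax _]. exact Ax.
  - intros x y [_ Hax] Ay Hxy. split; [exact Ay | exact (vle_trans _ _ _ Hax Hxy)].
  - intros x0 x1 t A0 A1 Ht [_ Hac].
    destruct (solid_decomposition a x0 x1 t Aa A0 A1 Ht Hac) as [u0 [u1 [Au0 [Hu0 [Au1 [Hu1 Heq]]]]]].
    destruct (Hext u0 u1 t Au0 Au1 Ht Heq) as [-> ->]. auto.
Qed.

Lemma chain_face_intersection (S0 : X -> Prop) (C : (X -> Prop) -> Prop) :
  order_face S0 -> (forall S, C S -> order_face S /\ forall x, S x -> S0 x) ->
  (forall S T, C S -> C T -> (forall x, T x -> S x) \/ (forall x, S x -> T x)) ->
  order_face (fun x => S0 x /\ forall S, C S -> S x).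
Proof.
  intros HS0 HC Ctot. split.
  - apply (closed_and tau Hlc); [exact (face_closed _ HS0)|].
    apply (closed_ext tau (fun x => forall S : {S | C S}, proj1_sig S x)).
    + intro x; split; [intros H S CS; exact (H (exist _ S CS)) | intros H [S CS]; exact (H S CS)].
    + apply (closed_Inter tau Hlc). intros [S CS]. exact (face_closed _ (proj1 (HC S CS))).
  - destruct (compact_nested_inter tau Hlc A HAcomp {S | C S} S0 (@proj1_sig _ _)
      (face_closed _ HS0) (face_sub _ HS0)) as [x [S0x Hx]].
    + intros [S CS]. exact (face_closed _ (proj1 (HC S CS))).
    + intros [S CS] [T CT]. destruct (Ctot S T CS CT); [right|left]; assumption.
    + exact (face_nonempty _ HS0).
    + intros [S CS]. destruct (HC S CS) as [HS SS0]. destruct (face_nonempty _ HS) as [x Sx].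
      exists x. auto.
    + exists x. split; [exact S0x|]. intros S CS. exact (Hx (exist _ S CS)).
  - intros x [S0x _]. exact (face_sub _ HS0 x S0x).
  - intros x y [S0x Hx] Ay Hxy. split; [exact (face_up _ HS0 x y S0x Ay Hxy)|].
    intros S CS. exact (face_up _ (proj1 (HC S CS)) x y (Hx S CS) Ay Hxy).
  - intros x0 x1 t A0 A1 Ht [S0c Hc].
    destruct (face_split _ HS0 x0 x1 t A0 A1 Ht S0c) as [S0x0 S0x1].
    split; split; auto; intros S CS;
      apply (face_split _ (proj1 (HC S CS)) x0 x1 t A0 A1 Ht (Hc S CS)).
Qed.

Lemma minimal_face_below (S0 : X -> Prop) : order_face S0 ->
  exists F, order_face F /\ (forall x, F x -> S0 x) /\
    forall S, order_face S -> (forall x, S x -> F x) -> forall x, F x -> S x.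
Proof.
  intro HS0.
  destruct (zorn_in (X -> Prop) (fun S => order_face S /\ forall x, S x -> S0 x)
              (fun S T => forall x, T x -> S x)) as [F [[HF FS0] Fmin]].
  - intros S x Sx; exact Sx.
  - intros R S T HRS HST x Tx; auto.
  - intros S T _ _ HTS HST. apply set_ext. intro x; split; auto.
  - intros C HC Ctot.
    exists (fun x => S0 x /\ forall S, C S -> S x). split; [split|].
    + apply chain_face_intersection; assumption.
    + intros x [S0x _]; exact S0x.
    + intros S CS x [_ Hx]. exact (Hx S CS).
  - exists F. split; [exact HF|]. split; [exact FS0|].
    intros S HS SF x Fx.
    assert (E : S = F) by (apply Fmin; [split; auto | exact SF]).
    rewrite E. exact Fx.
Qed.

Lemma peak_face (F : X -> Prop) (g : X -> R) (M : R) :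
  order_face F -> usc tau g -> convex_fun g ->
  (forall z, F z -> g z <= M) -> (exists z0, F z0 /\ M <= g z0) ->
  order_face (fun x => A x /\ exists w, (F w /\ M <= g w) /\ vle w x).
Proof.
  intros HF Hgusc Hgconv HM [z0 [Fz0 Hz0]]. split.
  - apply (closed_and tau Hlc); [exact (compact_closed tau Hlc A HAcomp)|].
    apply (closed_upward_closure tau Hlc A HAcomp Hpos).
    + apply (closed_and tau Hlc); [exact (face_closed _ HF) | apply closed_superlevel, Hgusc].
    + intros w [Fw _]. exact (face_sub _ HF w Fw).
  - exists z0. split; [exact (face_sub _ HF z0 Fz0)|]. exists z0. split; [auto | apply vle_refl].
  - intros x [Ax _]. exact Ax.
  - intros x y [_ [w [Hw Hwx]]] Ay Hxy. split; [exact Ay|]. exists w. split; [exact Hw|].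
    exact (vle_trans _ _ _ Hwx Hxy).
  - intros x0 x1 t A0 A1 Ht [_ [w [[Fw Mw] Hwc]]].
    destruct (solid_decomposition w x0 x1 t (face_sub _ HF w Fw) A0 A1 Ht Hwc)
      as [u0 [u1 [Au0 [Hu0 [Au1 [Hu1 ->]]]]]].
    destruct (face_split _ HF u0 u1 t Au0 Au1 Ht Fw) as [Fu0 Fu1].
    destruct (cmb_at_max (g u0) (g u1) M t Ht (HM u0 Fu0) (HM u1 Fu1)
                (Rle_trans _ _ _ Mw (Hgconv t u0 u1 Ht))) as [M0 M1].
    split; split; auto.
    + exists u0. auto.
    + exists u1. auto.
Qed.

(** A minimal order face is the singleton of its minimal element: a second
    point would be separated from it by a convex function, whose peak face
    would be a strictly smaller order face. *)
Lemma minimal_face_singleton (F : X -> Prop) (m : X) :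
  order_face F -> (forall S, order_face S -> (forall x, S x -> F x) -> forall x, F x -> S x) ->
  F m -> (forall x, F x -> vle x m -> x = m) -> forall y, F y -> y = m.
Proof.
  intros HF Fmin Fm Hm y Fy. apply NNPP; intro Hym.
  destruct (convex_usc_separation tau Hlc m y (fun E => Hym (eq_sym E)))
    as [g [Hgusc [Hgconv [Hgm Hgy]]]].
  destruct (usc_attains_max tau Hlc A HAcomp F g (face_closed _ HF) (face_sub _ HF)
              (face_nonempty _ HF) Hgusc) as [z0 [Fz0 Hmax]].
  assert (Hpeak := peak_face F g (g z0) HF Hgusc Hgconv Hmax
                     (ex_intro _ z0 (conj Fz0 (Rle_refl _)))).
  assert (Hsub : forall x, (A x /\ exists w, (F w /\ g z0 <= g w) /\ vle w x) -> F x).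
  { intros x [Ax [w [[Fw _] Hwx]]]. exact (face_up _ HF w x Fw Ax Hwx). }
  destruct (Fmin _ Hpeak Hsub m Fm) as [_ [w [[Fw Hw] Hwm]]].
  rewrite (Hm w Fw Hwm) in Hw.
  pose proof (Hmax y Fy). lra.
Qed.

Lemma singleton_face_order_extreme (F : X -> Prop) (b : X) :
  order_face F -> F b -> (forall y, F y -> y = b) -> order_extreme_point A b.
Proof.
  intros HF Fb Fsingle. split; [exact (face_sub _ HF b Fb)|].
  intros x0 x1 t A0 A1 Ht Hb.
  assert (Ac : A (cmb t x0 x1)) by (apply HAconv; auto; lra).
  destruct (face_split _ HF x0 x1 t A0 A1 Ht (face_up _ HF b _ Fb Ac Hb)) as [F0 F1].
  split; [exact (Fsingle x0 F0) | exact (eq_sym (Fsingle x1 F1))].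
Qed.

End OrderFaces.

Theorem mainTheorem12 (X : BanachLattice) (tau : (X -> Prop) -> Prop)
  (Htau : sufficiently_rich tau) (A : X -> Prop)
  (HApos : forall x, A x -> positive_cone X x)
  (HAcomp : compact_in tau A) (HAconv : convex_set A) (HAsolid : positive_solid A) :
  forall a, extreme_point A a -> exists b, order_extreme_point A b /\ vle a b.
Proof.
  intros a Ha. destruct Htau as [Hlc [_ Hpos]].
  destruct (minimal_face_below tau Hlc A HAcomp _
              (extreme_upper_face tau Hlc Hpos A HApos HAcomp HAsolid a Ha))
    as [F [HF [FS0 Fmin]]].
  destruct (closed_has_minimal tau Hlc A HAcomp Hpos F (face_closed _ _ _ HF)
              (face_sub _ _ _ HF) (face_nonempty _ _ _ HF)) as [b [Fb Hb]].
  exists b. split.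
  - apply (singleton_face_order_extreme tau A HAconv F b HF Fb).
    exact (minimal_face_singleton tau Hlc Hpos A HApos HAcomp HAsolid F b HF Fmin Fb Hb).
  - exact (proj2 (FS0 b Fb)).
Qed.
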